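(* Let $A$ be the filtered boundary matrix of a Morse decomposition with respect to an admissible enumeration $\sigma_1,\dots,\sigma_n$, and let $B$ be any matrix obtained from $A$ by a finite sequence of operations, each adding some column $s$ to some column $j$ with $s<j$ (for instance any intermediate matrix of ConMat or of a complete column reduction). Let $j$ be a homogeneous column of $B$ and let $s<j$ be a nonzero column of $B$ with $B[\mathrm{low}_B(s),j]=1$. If adding column $s$ to column $j$ changes the pivot of column $j$, then column $s$ is homogeneous, $\sigma_s$ and $\sigma_j$ lie in the same Morse set, and $\mathrm{low}_B(s)=\mathrm{low}_B(j)$.
   Context: $K$ is a finite simplicial complex ($\tau\le\sigma$: $\tau$ is a face of $\sigma$; $\mathrm{cl}(\sigma)=\{\tau:\tau\le\sigma\}$). A multivector field $\mathcal V$ on $K$ is a partition of $K$ into convex sets $V$ (if $\sigma,\tau\in V$ and $\sigma\le\mu\le\tau$ then $\mu\in V$); $[\sigma]_{\mathcal V}$ is the part containing $\sigma$, $F_{\mathcal V}(\sigma)=[\sigma]_{\mathcal V}\cup\mathrm{cl}(\sigma)$, and a path is a sequence $\sigma_1,\dots,\sigma_r$ with $\sigma_k\in F_{\mathcal V}(\sigma_{k-1})$. A Morse decomposition indexed by a finite poset $(P,\le_P)$ is a partition $K=\bigsqcup_{p\in P}M_p$ such that every path from $M_p$ to $M_q$ has $q\le_P p$; $[\sigma]_P$ is the $p$ with $\sigma\in M_p$. An admissible enumeration is $\sigma_1,\dots,\sigma_n$ of all simplices of $K$ such that (a) for some linear extension $\le_{lin}$ of $\le_P$, $i\le j\Rightarrow[\sigma_i]_P\le_{lin}[\sigma_j]_P$;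 (b) if $\sigma_i$ is a proper face of $\sigma_j$ then $i<j$. The filtered boundary matrix $A$ is the $n\times n$ $\mathbb Z_2$-matrix with $A[i,j]=1$ iff $\sigma_i$ is a codimension-one face of $\sigma_j$; row/column $i$ represents $\sigma_i$. Adding column $s$ to column $j$ means replacing column $j$ by the mod-2 sum. For a nonzero column $j$ of a matrix $B$, its pivot $\mathrm{low}_B(j)$ is the largest $i$ with $B[i,j]=1$ (a zero column has no pivot). Column $j$ is homogeneous if nonzero and $\sigma_j$, $\sigma_{\mathrm{low}_B(j)}$ are in the same Morse set. ConMat reduction phase: for $j=1,\dots,n$, for $i=\mathrm{low}(j)$ down to $1$: if the current entry $(i,j)$ is $1$ and some homogeneous column $s<j$ has pivot $i$, add column $s$ to column $j$. A complete column reduction of a matrix is a finite sequence of additions of a column $s$ to a column $j$ with $s<j$ (no homogeneity restriction) ending in a matrix whose nonzero columns have pairwise distinct pivots. *)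

From HB Require Import structures.
From mathcomp Require Import all_boot all_order all_algebra.
Set Implicit Arguments. Unset Strict Implicit. Unset Printing Implicit Defensive.
Import Order.TTheory GRing.Theory.

(* Simplices of K are nonempty finite subsets of a finite vertex type V.
   The face relation tau <= sigma is set inclusion tau \subset sigma. *)
Section Defs.
Variable V : finType.
Implicit Types (K : {set {set V}}) (s t : {set V}).

Definition simplicial_complex K : Prop :=
  set0 \notin K /\
  forall s t, s \in K -> t \subset s -> t != set0 -> t \in K.

Definition cl K s : {set {set V}} := [set t in K | t \subset s].

Definition codim1_face s t : bool := (s \subset t) && (#|t| == #|s|.+1).

Definition convex_set (W : {set {set V}}) : Prop :=
  forall s m t : {set V}, s \in W -> t \in W -> s \subset m -> m \subset t -> m \in W.

Definition multivector_field K (mv : {set {set {set V}}}) : Prop :=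
  partition mv K /\ forall W, W \in mv -> convex_set W.

Definition Fmv K (mv : {set {set {set V}}}) s : {set {set V}} :=
  pblock mv s :|: cl K s.

Definition Frel K mv : rel {set V} := fun a b => b \in Fmv K mv a.

(* Morse decomposition indexed by the finite poset P, given by the map
   sigma |-> [sigma]_P (Morse set M_p = [set sigma in K | morse sigma == p]):
   every path from M_p to M_q satisfies q <=_P p. *)
Definition morse_decomposition {d} (P : finPOrderType d) K mv
    (morse : {set V} -> P) : Prop :=
  forall x (p : seq {set V}), x \in K ->
    path (Frel K mv) x p -> (morse (last x p) <= morse x)%O.

End Defs.

Definition linear_extension {d} (P : finPOrderType d) (lin : rel P) : Prop :=
  [/\ reflexive lin, antisymmetric lin, transitive lin, total lin
    & forall x y : P, (x <= y)%O -> lin x y].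

(* admissible enumeration sigma_1..sigma_n, here sig : 'I_n -> {set V}
   (0-based indices), a bijection onto K *)
Definition admissible_enumeration (V : finType) {d} (P : finPOrderType d)
    (K : {set {set V}}) (morse : {set V} -> P) n (sig : 'I_n -> {set V}) : Prop :=
  [/\ injective sig, forall s, s \in K <-> exists i, sig i = s,
      exists lin : rel P, linear_extension lin /\
        forall i j : 'I_n, i <= j -> lin (morse (sig i)) (morse (sig j))
    & forall i j : 'I_n, sig i \proper sig j -> i < j].

Definition boundary_matrix (V : finType) n (sig : 'I_n -> {set V}) : 'M['F_2]_n :=
  \matrix_(i, j) (if codim1_face (sig i) (sig j) then 1%R else 0%R).

Definition addcol n (B : 'M['F_2]_n) (s j : 'I_n) : 'M['F_2]_n :=
  \matrix_(i, k) (if k == j then (B i j + B i s)%R else B i k).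

Inductive reachable n (A : 'M['F_2]_n) : 'M['F_2]_n -> Prop :=
| reach_refl : reachable A A
| reach_step B (s j : 'I_n) : reachable A B -> s < j -> reachable A (addcol B s j).

Definition low n (B : 'M['F_2]_n) (j : 'I_n) : option 'I_n :=
  [pick i | (B i j != 0%R) && [forall k : 'I_n, (i < k) ==> (B k j == 0%R)]].

Definition homogeneous (V : finType) {d} (P : finPOrderType d)
    (morse : {set V} -> P) n (sig : 'I_n -> {set V}) (B : 'M['F_2]_n) (j : 'I_n) : Prop :=
  exists i, low B j = Some i /\ morse (sig j) = morse (sig i).

From HB Require Import structures.
From mathcomp Require Import all_boot all_order all_algebra.
Import Order.TTheory GRing.Theory.
Local Open Scope ring_scope.
Set Implicit Arguments.
Unset Strict Implicit.
Unset Printing Implicit Defensive.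

(* Every matrix reachable from the boundary matrix is strictly upper
   triangular, since faces are enumerated before their cofaces.  Hence if
   adding column s to column j changes the pivot of j, the pivots of s and j
   coincide (a smaller pivot of s would be cancelled below the pivot of j),
   and low s < s < j.  An admissible enumeration lists Morse sets along a
   linear extension of the poset, so Morse sets are intervals of indices; as
   low j and j share a Morse set, so does s. *)

Section Pivots.

Variable n : nat.
Implicit Types (B : 'M['F_2]_n) (c i j k l r s : 'I_n).

Lemma low_eq_SomeP B c l :
  low B c = Some l <-> B l c != 0 /\ forall k : 'I_n, (l < k)%N -> B k c = 0.
Proof.
rewrite /low; split.
  case: pickP => [x /andP[Bxc /forallP zero_below] [<-] | _ //].
  split=> [// | k lt_xk].
  by apply/eqP; move: (zero_below k); rewrite lt_xk.
move=> [Blc zero_below]; case: pickP => [x /andP[Bxc /forallP zero_x] | none].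
  congr Some; apply/val_inj/eqP; rewrite eqn_leq.
  apply/andP; split; rewrite leqNgt; apply/negP => lt.
    by move: Bxc; rewrite zero_below ?eqxx.
  by move: (zero_x l); rewrite lt /= (negbTE Blc).
move: (none l); rewrite Blc /= => /negbT/negP[].
by apply/forallP => k; apply/implyP => /zero_below ->.
Qed.

Lemma low_max B c l k : low B c = Some l -> B k c != 0 -> (k <= l)%N.
Proof.
case/low_eq_SomeP => _ zero_below Bkc; rewrite leqNgt; apply/negP => /zero_below.
by move/eqP; rewrite (negbTE Bkc).
Qed.

Lemma addcol_col B s j k : addcol B s j k j = B k j + B k s.
Proof. by rewrite mxE eqxx. Qed.

Lemma low_addcol_lt B s j i l :
  low B s = Some i -> low B j = Some l -> (i < l)%N -> low (addcol B s j) j = Some l.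
Proof.
move=> /low_eq_SomeP[_ zero_s] /low_eq_SomeP[Blj zero_j] lt_il.
apply/low_eq_SomeP; rewrite addcol_col zero_s // addr0; split=> // k lt_lk.
by rewrite addcol_col zero_j // zero_s ?addr0 // (ltn_trans lt_il lt_lk).
Qed.

Lemma low_addcol_changed B s j i l :
  low B s = Some i -> low B j = Some l -> B i j != 0 ->
  low (addcol B s j) j <> Some l -> i = l.
Proof.
move=> low_s low_j Bij changed; apply/val_inj/eqP; rewrite eqn_leq.
rewrite (low_max low_j Bij) leqNgt; apply/negP => lt_il.
exact/changed/(low_addcol_lt low_s low_j).
Qed.

Definition strictly_upper B := forall r c, B r c != 0 -> (r < c)%N.

Lemma addcol_strictly_upper B s j :
  (s < j)%N -> strictly_upper B -> strictly_upper (addcol B s j).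
Proof.
move=> lt_sj upB r c; rewrite mxE; have [-> | _] := eqVneq c j; last exact: upB.
have [-> | /upB //] := eqVneq (B r j) 0; rewrite add0r => /upB lt_rs.
exact: ltn_trans lt_sj.
Qed.

Lemma reachable_strictly_upper A B :
  strictly_upper A -> reachable A B -> strictly_upper B.
Proof. by move=> upA; elim=> // {}B s j _ upB lt_sj; apply: addcol_strictly_upper. Qed.

End Pivots.

Section Admissible.

Variables (V : finType) (d : Order.disp_t) (P : finPOrderType d).
Variables (K : {set {set V}}) (morse : {set V} -> P).
Variables (n : nat) (sig : 'I_n -> {set V}).
Hypothesis adm : admissible_enumeration K morse sig.

Lemma admissible_boundary_strictly_upper : strictly_upper (boundary_matrix sig).
Proof.
case: adm => _ _ _ faces_first r c; rewrite mxE.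
case: ifP => [/andP[sub /eqP card] _ | _]; last by rewrite eqxx.
by apply: faces_first; rewrite properEcard sub card ltnSn.
Qed.

Lemma admissible_morse_interval (i s j : 'I_n) :
  (i <= s <= j)%N -> morse (sig i) = morse (sig j) -> morse (sig s) = morse (sig j).
Proof.
case: adm => _ _ [lin [[_ lin_anti _ _ _] lin_mono]] _.
move=> /andP[le_is le_sj] morse_ij; apply: lin_anti.
by rewrite lin_mono //= -morse_ij lin_mono.
Qed.

End Admissible.

Theorem proposition2 (V : finType) (d : Order.disp_t) (P : finPOrderType d)
    (K : {set {set V}}) (mv : {set {set {set V}}}) (morse : {set V} -> P)
    (n : nat) (sig : 'I_n -> {set V}) (B : 'M['F_2]_n) (s j i : 'I_n) :
  simplicial_complex K ->
  multivector_field K mv ->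
  morse_decomposition K mv morse ->
  admissible_enumeration K morse sig ->
  reachable (boundary_matrix sig) B ->
  homogeneous morse sig B j ->
  (s < j)%N ->
  low B s = Some i ->
  B i j = 1 ->
  low (addcol B s j) j <> low B j ->
  [/\ homogeneous morse sig B s, morse (sig s) = morse (sig j) & low B s = low B j].
Proof.
move=> _ _ _ adm reachB [l [low_j morse_jl]] lt_sj low_s Bij changed.
have upB := reachable_strictly_upper (admissible_boundary_strictly_upper adm) reachB.
have eq_il : i = l.
  apply: (low_addcol_changed low_s low_j); first by rewrite Bij oner_eq0.
  by rewrite -low_j.
subst l.
have [Bis _] := (low_eq_SomeP _ _ _).1 low_s.
have morse_sj : morse (sig s) = morse (sig j).
  apply: (admissible_morse_interval adm _ (esym morse_jl)).
  by rewrite (ltnW (upB _ _ Bis)) (ltnW lt_sj).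
split; [exists i; split | exact: morse_sj | by rewrite low_s low_j].
  exact: low_s.
by rewrite morse_sj.
Qed.
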